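(* Let $1\le d\le n$. If $x\in\mathbb{R}^n$ satisfies $e_{d-1}(x)=0$, then $$|e_d(x)|\ge \frac{\binom{n}{d}}{(2n^{d+1})^{n-d}}\,|m_d(x)|.$$
   Context: $e_k(x)=\sum_{S\subseteq[n],|S|=k}\prod_{i\in S}x_i$ is the $k$-th elementary symmetric polynomial (with $e_0=1$), and $m_d(x)=\max_{S\subseteq[n],|S|=d}\prod_{i\in S}|x_i|$ is the product of the $d$ largest entries of $x$ in absolute value. *)

From mathcomp Require Import all_boot all_order all_algebra.
Set Implicit Arguments. Unset Strict Implicit. Unset Printing Implicit Defensive.
Import Order.TTheory GRing.Theory Num.Theory.
Local Open Scope ring_scope.

Definition elem_sym (R : realFieldType) (n k : nat) (x : 'I_n -> R) : R :=
  \sum_(S : {set 'I_n} | #|S| == k) \prod_(i in S) x i.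

(* product of the d largest entries of x in absolute value:
   max over d-subsets S of prod_{i in S} |x_i| (all values are >= 0, so 0 is
   a neutral initial value for the max) *)
Definition mtop (R : realFieldType) (n d : nat) (x : 'I_n -> R) : R :=
  \big[Num.max/0]_(S : {set 'I_n} | #|S| == d) \prod_(i in S) `|x i|.

From mathcomp Require Import all_boot all_order all_algebra.
From mathcomp Require Import ring zify.
Set Implicit Arguments. Unset Strict Implicit. Unset Printing Implicit Defensive.
Import Order.TTheory GRing.Theory Num.Theory.
Local Open Scope ring_scope.

(* Write k = d - 1 and x^S for the monomial of a set S.  Expanding over pairs
   of k-sets gives
     e_k^2 - e_(k-1) e_(k+1) = sum_(|S| = |S'| = k) x^S x^S' / (k + 1 - |S :&: S'|),
   and the kernel 1 / (k + 1 - q) is a nonnegative combination of the kernels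
   C(q, p), each of which yields a sum of squares; keeping only p = k gives
     e_k^2 - e_(k-1) e_(k+1) >= (k + 1)^-1 sum_(|S| = k) (x^S)^2 >= m_k^2 / (k + 1).
   When e_k = 0 this bounds m_k^2 by (k + 1) |e_(k-1)| |e_(k+1)|; with the
   log-concavity m_(k-1) m_(k+1) <= m_k^2 and |e_(k-1)| <= C(n, k-1) m_(k-1) it
   gives m_d <= d C(n, d-2) |e_d|, which beats the claimed constant when d < n;
   for d = n simply m_n = |e_n|. *)

Lemma natr_binSS (R : numFieldType) (m i : nat) :
  'C(m.+1, i.+1)%:R = m.+1%:R * 'C(m, i)%:R / i.+1%:R :> R.
Proof. by rewrite -natrM mul_bin_diag natrM mulrC mulKf ?pnatr_eq0. Qed.

Lemma sum_bin_ratio (R : numFieldType) (q k : nat) : (q <= k)%N ->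
  \sum_(p < k.+1) ('C(q, p)%:R / 'C(k, p)%:R : R) = k.+1%:R / (k.+1 - q)%:R.
Proof.
have nz m : m.+1%:R != 0 :> R by rewrite pnatr_eq0.
elim: q k => [|q IHq] k le_qk.
  rewrite big_ord_recl big1 => [|i _]; last by rewrite bin0n mul0r.
  by rewrite !bin0 subn0 divr1 divff ?addr0.
case: k le_qk => // k le_qk.
have ratioSS (i : 'I_k.+1) : 'C(q.+1, i.+1)%:R / 'C(k.+1, i.+1)%:R
    = q.+1%:R / k.+1%:R * ('C(q, i)%:R / 'C(k, i)%:R) :> R.
  have nz_bin : 'C(k, i)%:R != 0 :> R by rewrite pnatr_eq0 -lt0n bin_gt0 -ltnS.
  by rewrite !natr_binSS; field; rewrite nz_bin !nat1r !nz.
rewrite big_ord_recl !bin0 divr1.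
under eq_bigr => i _ do rewrite lift0 ratioSS.
rewrite -mulr_sumr IHq // subSS.
have nz_sub : (k.+1 - q)%:R != 0 :> R by rewrite pnatr_eq0 subn_eq0 -ltnNge.
have -> : k.+2%:R = (k.+1 - q)%:R + q.+1%:R :> R by rewrite -natrD addnS subnK // ltnW.
by field; rewrite nz_sub nat1r nz.
Qed.

Section SetSums.
Variables (R : nmodType) (T : finType).

Lemma sum_card_setU1 (i : T) (a : nat) (G : {set T} -> R) :
  \sum_(A : {set T} | (#|A| == a) && (i \notin A)) G (i |: A)
  = \sum_(A : {set T} | (#|A| == a.+1) && (i \in A)) G A.
Proof.
rewrite [RHS](reindex_onto (fun A => i |: A) (fun A => A :\ i)) /=; last first.
  by move=> A /andP[_ iA]; rewrite setD1K.
apply: eq_bigl => A; rewrite setU11 andbT cardsU1.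
have [iA | niA] := boolP (i \in A); last by rewrite setU1K ?eqxx.
rewrite andbF; symmetry; apply/andP => -[_ /eqP eqA].
by move: iA; rewrite -eqA setD11.
Qed.

Lemma sum_card_setD1 (i : T) (b : nat) (G : {set T} -> R) :
  \sum_(B : {set T} | (#|B| == b.+1) && (i \in B)) G (B :\ i)
  = \sum_(B : {set T} | (#|B| == b) && (i \notin B)) G B.
Proof.
rewrite -sum_card_setU1; apply: eq_bigr => B /andP[_ iB].
by rewrite setU1K.
Qed.

Lemma sum_setD_by_point (P Q : pred {set T}) (G : {set T} -> {set T} -> T -> R) :
  \sum_(A : {set T} | P A) \sum_(B : {set T} | Q B) \sum_(i in B :\: A) G A B i
  = \sum_i \sum_(A : {set T} | P A && (i \notin A))
      \sum_(B : {set T} | Q B && (i \in B)) G A B i.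
Proof.
under eq_bigr => A _ do under eq_bigr => B _ do rewrite big_mkcond.
under eq_bigr => A _ do rewrite exchange_big /=.
rewrite exchange_big /=; apply: eq_bigr => i _.
rewrite (bigID (fun A : {set T} => i \notin A)) /= [X in _ + X]big1 ?addr0 => [|A /andP[_]].
  apply: eq_bigr => A /andP[_ iA]; rewrite big_mkcondr; apply: eq_bigr => B _.
  by rewrite !inE iA.
by rewrite negbK => iA; apply: big1 => B _; rewrite !inE iA.
Qed.

Lemma sum_exchange_point (a b : nat) (F : {set T} -> {set T} -> T -> R) :
  \sum_(A : {set T} | #|A| == a) \sum_(B : {set T} | #|B| == b.+1)
      \sum_(i in B :\: A) F (i |: A) (B :\ i) i
  = \sum_(A : {set T} | #|A| == a.+1) \sum_(B : {set T} | #|B| == b)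
      \sum_(i in A :\: B) F A B i.
Proof.
rewrite [RHS]exchange_big !sum_setD_by_point; apply: eq_bigr => i _.
under eq_bigr => A _ do rewrite (sum_card_setD1 i b (fun B => F (i |: A) B i)).
rewrite exchange_big.
by under eq_bigr => B _ do rewrite (sum_card_setU1 i a (fun A => F A B i)).
Qed.

Lemma cardsD1_succ (S : {set T}) i d : i \in S -> #|S| = d.+1 -> #|S :\ i| = d.
Proof. by move=> iS; rewrite (cardsD1 i) iS add1n => -[]. Qed.

End SetSums.

Section PairSum.
Variables (R : pzRingType) (T : finType) (f : {set T} -> R).

Definition pair_sum (k : nat) (c : nat -> R) : R :=
  \sum_(S : {set T} | #|S| == k) \sum_(S' : {set T} | #|S'| == k)
    c #|S :&: S'| * (f S * f S').

Lemma eq_pair_sum k (c c' : nat -> R) :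
  (forall q, (q <= k)%N -> c q = c' q) -> pair_sum k c = pair_sum k c'.
Proof.
move=> eq_c; apply: eq_bigr => S /eqP cardS; apply: eq_bigr => S' _.
by rewrite eq_c // -cardS subset_leq_card // subsetIl.
Qed.

Lemma pair_sumB k (c c' : nat -> R) :
  pair_sum k c - pair_sum k c' = pair_sum k (fun q => c q - c' q).
Proof.
rewrite -sumrB; apply: eq_bigr => S _; rewrite -sumrB; apply: eq_bigr => S' _.
by rewrite mulrBl.
Qed.

Lemma pair_sumZ k (a : R) (c : nat -> R) :
  pair_sum k (fun q => a * c q) = a * pair_sum k c.
Proof.
rewrite mulr_sumr; apply: eq_bigr => S _; rewrite mulr_sumr; apply: eq_bigr => S' _.
by rewrite -mulrA.
Qed.

Lemma pair_sum_sum (I : Type) (r : seq I) k (c : I -> nat -> R) :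
  pair_sum k (fun q => \sum_(p <- r) c p q) = \sum_(p <- r) pair_sum k (c p).
Proof.
rewrite /pair_sum [RHS]exchange_big /=; apply: eq_bigr => S _.
rewrite [RHS]exchange_big /=; apply: eq_bigr => S' _.
by rewrite mulr_suml.
Qed.

Lemma sqr_sum_card k :
  (\sum_(S : {set T} | #|S| == k) f S) ^+ 2 = pair_sum k (fun=> 1).
Proof.
rewrite expr2 big_distrlr; apply: eq_bigr => S _; apply: eq_bigr => S' _.
by rewrite mul1r.
Qed.

Lemma pair_sum_bin p k :
  pair_sum k (fun q => 'C(q, p)%:R)
  = \sum_(P : {set T} | #|P| == p)
      (\sum_(S : {set T} | (#|S| == k) && (P \subset S)) f S) ^+ 2.
Proof.
under [RHS]eq_bigr => P _ do rewrite big_mkcondr expr2 big_distrlr.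
rewrite exchange_big /=; apply: eq_bigr => S _.
rewrite exchange_big /=; apply: eq_bigr => S' _.
rewrite (bigID (fun P : {set T} => P \subset S :&: S')) /=.
rewrite [X in _ + X]big1 ?addr0 => [|P /andP[_]]; last first.
  by rewrite subsetI; case: (P \subset S); case: (P \subset S'); rewrite ?mul0r ?mulr0.
rewrite (eq_bigr (fun=> f S * f S')) => [|P /andP[_]]; last first.
  by rewrite subsetI => /andP[-> ->].
rewrite sumr_const -(cards_draws (S :&: S') p) mulr_natl.
by congr (_ *+ _); apply: eq_card => P; rewrite inE andbC.
Qed.

Lemma pair_sum_bin_diag k :
  pair_sum k (fun q => 'C(q, k)%:R) = \sum_(S : {set T} | #|S| == k) f S ^+ 2.
Proof.
rewrite pair_sum_bin; apply: eq_bigr => P /eqP cardP; congr (_ ^+ 2).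
apply: big_pred1 => S /=; apply/andP/eqP => [[/eqP cardS subPS]|->].
  by apply/eqP; rewrite eq_sym eqEcard subPS cardS cardP leqnn.
by rewrite cardP eqxx subxx.
Qed.

End PairSum.

Section ElemSym.
Variables (R : realFieldType) (n : nat) (x : 'I_n -> R).

Local Notation e k := (elem_sym k x).
Local Notation m d := (mtop d x).
Local Notation xS S := (\prod_(i in S) x i).

Lemma elem_sym0 : e 0 = 1.
Proof.
by rewrite /elem_sym (big_pred1 set0) ?big_set0 // => S; rewrite /= cards_eq0.
Qed.

Lemma elem_sym_mulSS j :
  e j * e j.+2
  = pair_sum (fun S => xS S) j.+1 (fun q => (j.+1 - q)%:R / (j.+2 - q)%:R).
Proof.
pose g q : R := (j.+2 - q)%:R^-1.
have exchange (A B : {set 'I_n}) i : i \in B :\: A ->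
    g #|(i |: A) :&: (B :\ i)| * (xS (i |: A) * xS (B :\ i))
    = g #|A :&: B| * (xS A * xS B).
  rewrite inE => /andP[iNA iB]; have -> : (i |: A) :&: (B :\ i) = A :&: B.
    by apply/setP => y; rewrite !inE; case: eqP => [->|]; rewrite ?(negbTE iNA) ?andbF.
  by rewrite (big_setU1 _ iNA) (big_setD1 _ iB) /=; ring.
transitivity (\sum_(A : {set 'I_n} | #|A| == j.+2) \sum_(B : {set 'I_n} | #|B| == j)
                 \sum_(i in A :\: B) g #|A :&: B| * (xS A * xS B)).
  rewrite mulrC big_distrlr; apply: eq_bigr => A /eqP cardA.
  apply: eq_bigr => B /eqP cardB.
  have le_AB_j : (#|A :&: B| <= j)%N by rewrite -cardB subset_leq_card // subsetIr.
  rewrite sumr_const cardsD cardA -mulr_natl mulrA /g mulfV ?mul1r //.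
  by rewrite pnatr_eq0 subn_eq0 -ltnNge ltnS ltnW.
rewrite -sum_exchange_point; apply: eq_bigr => A _; apply: eq_bigr => B /eqP cardB.
rewrite [LHS](eq_bigr (fun=> g #|A :&: B| * (xS A * xS B))) => [|i /exchange //].
by rewrite sumr_const cardsD cardB [B :&: A]setIC -[LHS]mulr_natl mulrA.
Qed.

Lemma newton_gap j :
  e j.+1 ^+ 2 - e j * e j.+2
  = pair_sum (fun S => xS S) j.+1 (fun q => (j.+2 - q)%:R^-1).
Proof.
rewrite sqr_sum_card elem_sym_mulSS pair_sumB; apply: eq_pair_sum => q le_q.
have -> : (j.+2 - q)%:R = (j.+1 - q)%:R + 1 :> R by rewrite subSn // -natr1.
by field; rewrite natr1 pnatr_eq0.
Qed.

Lemma newton_sum_sqr j :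
  j.+2%:R^-1 * \sum_(S : {set 'I_n} | #|S| == j.+1) xS S ^+ 2
  <= e j.+1 ^+ 2 - e j * e j.+2.
Proof.
set k := j.+1.
pose c p q : R := 'C(k, p)%:R^-1 * 'C(q, p)%:R.
rewrite newton_gap
  (@eq_pair_sum _ _ _ _ _ (fun q => k.+1%:R^-1 * \sum_(p < k.+1) c p q)); last first.
  move=> q le_qk; under eq_bigr => p _ do rewrite /c mulrC.
  by rewrite sum_bin_ratio // mulKf ?pnatr_eq0.
rewrite pair_sumZ pair_sum_sum ler_wpM2l ?invr_ge0 ?ler0n // (bigD1 ord_max) //=.
rewrite pair_sumZ binn invr1 mul1r pair_sum_bin_diag lerDl.
apply: sumr_ge0 => p _; rewrite pair_sumZ pair_sum_bin.
by rewrite mulr_ge0 ?invr_ge0 ?ler0n ?sumr_ge0 // => P _; rewrite sqr_ge0.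
Qed.

Lemma mtop_ge0 d : 0 <= m d.
Proof. exact: bigmax_ge_id. Qed.

Lemma norm_prod_le_mtop d (S : {set 'I_n}) : #|S| == d -> `|xS S| <= m d.
Proof. by move=> cardS; rewrite normr_prod; apply: (le_bigmax_cond _ _ cardS). Qed.

Lemma mtop_witness d :
  m d = 0 \/ exists2 S : {set 'I_n}, #|S| == d & m d = `|xS S|.
Proof.
apply: (big_ind (fun y => y = 0 \/ exists2 S : {set 'I_n}, #|S| == d & y = `|xS S|)).
- by left.
- by move=> a b Ha Hb; case: (leP a b).
- by move=> S cardS; right; exists S; rewrite ?normr_prod.
Qed.

Lemma mtop_eq0S d : m d = 0 -> m d.+1 = 0.
Proof.
move=> md0; have [//|[S /eqP cardS ->]] := mtop_witness d.+1.
have /set0Pn[i iS] : S != set0 by rewrite -card_gt0 cardS.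
have /eqP prod0 : xS (S :\ i) == 0.
  by rewrite -normr_le0 -md0 norm_prod_le_mtop ?(cardsD1_succ iS cardS).
by rewrite (big_setD1 i iS) /= prod0 mulr0 normr0.
Qed.

Lemma mtop_log_concave j : m j.+2 * m j <= m j.+1 ^+ 2.
Proof.
have [->|[S /eqP cardS ->]] := mtop_witness j.+2; first by rewrite mul0r sqr_ge0.
have [->|[U /eqP cardU ->]] := mtop_witness j; first by rewrite mulr0 sqr_ge0.
have /subsetPn[i iS iNU] : ~~ (S \subset U).
  by apply/negP => /subset_leq_card; rewrite cardS cardU; lia.
have -> : `|xS S| * `|xS U| = `|xS (S :\ i)| * `|xS (i |: U)|.
  by rewrite (big_setD1 i iS) (big_setU1 _ iNU) /= !normrM; ring.
rewrite expr2; apply: ler_pM; rewrite ?normr_ge0 // norm_prod_le_mtop //.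
  by rewrite (cardsD1_succ iS cardS).
by rewrite cardsU1 iNU cardU.
Qed.

Lemma norm_elem_sym_le d : `|e d| <= 'C(n, d)%:R * m d.
Proof.
apply: le_trans (ler_norm_sum _ _ _) _.
apply: le_trans (ler_sum _ (fun S => @norm_prod_le_mtop d S)) _.
rewrite (eq_bigl [in [set S : {set 'I_n} | S \subset setT & #|S| == d]]) => [|S].
  by rewrite sumr_const cards_draws cardsT card_ord mulr_natl.
by rewrite !inE subsetT.
Qed.

Lemma sqr_mtop_le d : m d ^+ 2 <= \sum_(S : {set 'I_n} | #|S| == d) xS S ^+ 2.
Proof.
have sum_ge0 (P : pred {set 'I_n}) : 0 <= \sum_(S | P S) xS S ^+ 2.
  by apply: sumr_ge0 => S _; apply: sqr_ge0.
have [->|[S cardS ->]] := mtop_witness d; first by rewrite expr0n sum_ge0.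
by rewrite (bigD1 S) //= real_normK ?num_real // lerDl sum_ge0.
Qed.

Lemma mtop_all : m n = `|e n|.
Proof.
have all_setT (S : {set 'I_n}) : (#|S| == n) = (S == setT).
  have := max_card S; rewrite card_ord => le_S_n.
  by rewrite eqEcard subsetT cardsT card_ord eqn_leq le_S_n.
rewrite /mtop /elem_sym (big_pred1 setT all_setT) (eq_bigl _ _ all_setT).
by rewrite big_pred1_eq_id normr_prod max_l // -normr_prod normr_ge0.
Qed.

Lemma mtop_le_elem_sym j :
  e j.+1 = 0 -> m j.+2 <= (j.+2 * 'C(n, j))%:R * `|e j.+2|.
Proof.
move=> e0.
have sqr_le : m j.+1 ^+ 2 <= j.+2%:R * (`|e j| * `|e j.+2|).
  rewrite -ler_pdivrMl ?ltr0n //; apply: le_trans (ler_wpM2l _ (sqr_mtop_le _)) _.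
    by rewrite invr_ge0 ler0n.
  apply: le_trans (newton_sum_sqr j) _.
  by rewrite e0 expr0n sub0r -normrM -normrN ler_norm.
have [m0 | m_neq0] := eqVneq (m j) 0.
  by rewrite !mtop_eq0S // mulr_ge0 ?normr_ge0.
have m_gt0 : 0 < m j by rewrite lt_def m_neq0 mtop_ge0.
rewrite -(ler_pM2r m_gt0); apply: le_trans (mtop_log_concave j) _.
apply: le_trans sqr_le _; rewrite natrM -!mulrA ler_wpM2l //.
by rewrite mulrCA [X in X <= _]mulrC ler_wpM2l ?normr_ge0 // norm_elem_sym_le.
Qed.

End ElemSym.

Lemma bin_le_expn n k : ('C(n, k) <= n ^ k)%N.
Proof.
elim: k n => [|k IHk] [|n] //.
apply: leq_trans (leq_pmull _ (ltn0Sn k)) _.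
rewrite -mul_bin_diag expnS leq_mul2l /=; apply: leq_trans (IHk n) _.
by case: k {IHk} => // k; rewrite leq_exp2r.
Qed.

Lemma bin_coef_bound n j : (j.+2 < n)%N ->
  ('C(n, j.+2) * (j.+2 * 'C(n, j)) <= (2 * n ^ j.+3) ^ (n - j.+2))%N.
Proof.
move=> lt_jn; have n_gt0 : (0 < n)%N by apply: leq_trans lt_jn.
apply: (@leq_trans (n ^ (n - j.+2) * n ^ j.+1)).
  rewrite expnS; apply: leq_mul; first by rewrite -bin_sub ?(ltnW lt_jn) // bin_le_expn.
  by apply: leq_mul; [apply: ltnW | apply: bin_le_expn].
rewrite -expnD expnMn -expnM.
apply: (@leq_trans (n ^ (j.+3 * (n - j.+2)))); last by rewrite leq_pmull // expn_gt0.
have s_gt0 : (0 < n - j.+2)%N by rewrite subn_gt0.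
rewrite leq_pexp2l // mulSn leq_add2l.
exact: leq_trans (leqnSn _) (leq_pmulr _ s_gt0).
Qed.

Theorem lemma5 (R : realFieldType) (n d : nat) (x : 'I_n -> R) :
  (1 <= d)%N -> (d <= n)%N ->
  elem_sym (d.-1) x = 0 ->
  `|elem_sym d x| >= ('C(n, d))%:R / ((2 * n ^ d.+1) ^ (n - d))%:R * `|mtop d x|.
Proof.
move=> d_gt0 le_dn e0; rewrite ger0_norm ?mtop_ge0 //.
case: d d_gt0 le_dn e0 => [//|[_ _|j _ le_dn e0]].
  by rewrite elem_sym0 => /eqP; rewrite oner_eq0.
move: le_dn; rewrite leq_eqVlt => /orP[/eqP eq_dn | lt_dn].
  by rewrite eq_dn subnn binn expn0 divr1 mul1r mtop_all.
apply: le_trans (ler_wpM2l _ (mtop_le_elem_sym e0)) _.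
  by rewrite divr_ge0 ?ler0n.
rewrite mulrA ler_piMl ?normr_ge0 // mulrAC ler_pdivrMr; last first.
  by rewrite ltr0n expn_gt0 muln_gt0 expn_gt0 (ltn_trans _ lt_dn).
by rewrite mul1r -natrM ler_nat bin_coef_bound.
Qed.
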